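(* Let $K$ be a field, $S=K[x_1,\dots,x_n]$, $A\subseteq\{1,\dots,n\}$, $f=\prod_{j\in A}x_j$, and let $uK[Z]$ be a Stanley space of $S_f$. Then $H_{uK[Z]}(t)=Q(t)/(1-t)^m$, where $Q(t)$ is a polynomial with $Q(1)=1$ and $m=|Z|$.
   Context: $S_f=K[x_1,\dots,x_n,x_j^{-1}:j\in A]$ with $K$-basis the monomials $x^a=x_1^{a_1}\cdots x_n^{a_n}$, $a_j\in\mathbb Z$ for $j\in A$, $a_j\in\mathbb N$ otherwise. A Stanley space of $S_f$ is $uK[Z]$, the $K$-span of the monomials $uw$ ($w$ a monomial in the elements of $Z$), where $u$ is a monomial of $S_f$, $Z\subseteq\{x_1,\dots,x_n\}\cup\{x_j^{-1}:j\in A\}$ with $\{x_j,x_j^{-1}\}\not\subseteq Z$ for all $j\in A$, and $uK[Z]$ is a free $K[Z]$-module. It is $\mathbb Z^n$-graded with $x^a$ in degree $a$. For such a graded space $M=\bigoplus_aM_a$ with finite-dimensional components, $|a|=\sum_j|a_j|$, $M_d=\bigoplus_{|a|=d}M_a$, $H(M,d)=\dim_KM_d$, $H_M(t)=\sum_{d\ge0}H(M,d)t^d$. *)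

From mathcomp Require Import all_boot all_order all_algebra.
Set Implicit Arguments. Unset Strict Implicit. Unset Printing Implicit Defensive.
Import Order.TTheory GRing.Theory Num.Theory.
Local Open Scope ring_scope.

(* Exponent vectors of Laurent monomials x^a, a : 'I_n -> int
   (variables x_1..x_n are indexed by 'I_n = {0,..,n-1}). *)

Definition absdeg (n : nat) (a : 'I_n -> int) : nat := (\sum_(i < n) `|a i|)%N.

(* Stanley space u K[Z] with Z = {x_i : i in P} ∪ {x_j^{-1} : j in N}.
   x^a lies in u K[Z] iff a = u + e with e_i >= 0 (i in P), e_i <= 0 (i in N),
   e_i = 0 otherwise. *)
Definition in_stanley (n : nat) (u : 'I_n -> int) (P N : {set 'I_n})
    (a : 'I_n -> int) : bool :=
  [forall i, if i \in P then u i <= a i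
             else if i \in N then a i <= u i
             else a i == u i].

Definition decode (n d : nat) (v : {ffun 'I_n -> 'I_(2 * d + 1)}) : 'I_n -> int :=
  fun i => (nat_of_ord (v i))%:Z - d%:Z.

(* H(uK[Z], d) = dim_K (uK[Z])_d = number of monomials x^a in uK[Z] with
   |a| = d (all such a lie in [-d,d]^n). *)
Definition hilb (n : nat) (u : 'I_n -> int) (P N : {set 'I_n}) (d : nat) : nat :=
  #|[set v : {ffun 'I_n -> 'I_(2 * d + 1)} |
      in_stanley u P N (decode v) && (absdeg (decode v) == d)]|.

From mathcomp Require Import all_boot all_order all_algebra.
From mathcomp Require Import zify.
Import Order.TTheory GRing.Theory Num.Theory.
Local Open Scope ring_scope.

(* The monomials of u K[Z] form a product, over the coordinates i, of sets of
   admissible exponents a_i, and |a| is additive over the coordinates, so the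
   Hilbert series of u K[Z] is the product of one-variable generating series
   G_i(t).  If x_i or x_i^-1 is in Z then G_i(t) has coefficient 1 in every
   degree above |u_i|, hence (1 - t) G_i(t) is a polynomial R_i with
   R_i(1) = 1; otherwise G_i(t) = t^|u_i|.  Thus (1 - t)^|Z| H(t) is the
   polynomial Q = prod_i R_i, and Q(1) = 1.  Polynomials being finite, all
   series identities are proved on coefficients up to a given degree. *)

Definition eq_upto {R : nzRingType} (D : nat) (p q : {poly R}) :=
  forall j, (j <= D)%N -> p`_j = q`_j.

Lemma eq_upto_mul {R : nzRingType} D (p p' q q' : {poly R}) :
  eq_upto D p p' -> eq_upto D q q' -> eq_upto D (p * q) (p' * q').
Proof.
move=> epp' eqq' j lejD; rewrite !coefM; apply: eq_bigr => k _.
have lekj : (k <= j)%N by rewrite -ltnS.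
by rewrite epp' ?eqq' ?(leq_trans lekj) // (leq_trans (leq_subr _ _)).
Qed.

Lemma eq_upto_prod {R : nzRingType} {I : finType} D (F G : I -> {poly R}) :
  (forall i, eq_upto D (F i) (G i)) -> eq_upto D (\prod_i F i) (\prod_i G i).
Proof.
move=> eFG; apply: (big_ind2 (eq_upto D)) => [//|p p' q q'|i _].
  exact: eq_upto_mul.
exact: eFG.
Qed.

Lemma sum_ord_mul_indicator {R : nzRingType} (M c : nat) (f : nat -> R) :
  (c < M)%N ->
  \sum_(x < M) f x * (x == c :> nat)%:R = f c.
Proof.
move=> ltcM; rewrite (bigD1 (Ordinal ltcM)) //= eqxx mulr1 big1 ?addr0 //.
move=> x neqx; suff /negbTE -> : (x != c :> nat) by rewrite mulr0.
by apply: contra neqx => /eqP eqxc; apply/eqP/val_inj.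
Qed.

Lemma count_abs_eq (a : int) (j : nat) :
  ((j%:Z == a) + ((j != 0) && (- j%:Z == a)))%N = (j == `|a|)%N :> nat.
Proof.
have [e1|h1] := eqVneq j%:Z a; have [e2|h2] := eqVneq (- j%:Z) a;
  have [e3|h3] := eqVneq j 0%N; have [e4|h4] := eqVneq j `|a|%N; lia.
Qed.

Section CoordinateSeries.

Variables (n : nat) (u : 'I_n -> int) (P N : {set 'I_n}).

Definition coord_ok (i : 'I_n) (a : int) : bool :=
  if i \in P then u i <= a else if i \in N then a <= u i else a == u i.

Definition coord_count (i : 'I_n) (j : nat) : int :=
  (coord_ok i j%:Z)%:R + ((j != 0)%N && coord_ok i (- j%:Z))%:R.

(* The generating polynomial of [coord_count i] truncated at degree B, written
   as a sum over the encoding of [-B, B] used by [hilb], so that its product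
   over i expands directly to [hilb]. *)
Definition coord_genpoly (B : nat) (i : 'I_n) : {poly int} :=
  \sum_(x : 'I_(2 * B + 1))
    (coord_ok i (x%:Z - B%:Z))%:R *: 'X^(`|x%:Z - B%:Z|%N).

Lemma coef_coord_genpoly B i j : (j <= B)%N ->
  (coord_genpoly B i)`_j = coord_count i j.
Proof.
move=> lejB; rewrite coef_sum.
have absE (x : nat) : (j == `|x%:Z - B%:Z|%N)%:R
    = (x == B + j)%N%:R + (j != 0)%N%:R * (x == B - j)%N%:R :> int.
  have [->|nzj] := eqVneq j 0%N; first by rewrite mul0r addr0; congr _%:R; lia.
  rewrite mul1r; case: (eqVneq x (B + j)) => [->|neqx].
    by rewrite (_ : (B + j == B - j)%N = false) ?addr0; [congr _%:R|]; lia.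
  by rewrite add0r; congr _%:R; lia.
under eq_bigr => x _ do rewrite coefZ coefXn absE mulrDr mulrCA.
rewrite big_split -mulr_sumr /=.
rewrite !(@sum_ord_mul_indicator _ _ _
          (fun x : nat => (coord_ok i (x%:Z - B%:Z))%:R)); [|lia..].
rewrite (_ : (B + j)%N%:Z - B%:Z = j%:Z); last by lia.
have [->|nzj] := eqVneq j 0%N; first by rewrite /coord_count /= !mul0r.
rewrite mul1r (_ : (B - j)%N%:Z - B%:Z = - j%:Z); last by lia.
by rewrite /coord_count nzj.
Qed.

Lemma hilb_coef_prod k :
  (hilb u P N k)%:R = (\prod_(i < n) coord_genpoly k i)`_k.
Proof.
have prod_nat_bool (b : 'I_n -> bool) : (\prod_i b i)%N = [forall i, b i].
  have natb_and x y : nat_of_bool (x && y) = (x * y)%N by rewrite mulnb.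
  by rewrite -(big_morph _ natb_and (erefl : nat_of_bool true = 1%N)) big_andE.
rewrite bigA_distr_bigA coef_sum.
under eq_bigr => f _ do
  rewrite (eq_bigr _ (fun i _ => esym (mul_polyC _ _))) big_split /=
          -rmorph_prod prodrXr coefCM coefXn -natr_prod prod_nat_bool -natrM.
rewrite -natr_sum /hilb -sum1dep_card big_mkcond /=; congr _%:R.
apply: eq_bigr => v _; rewrite /in_stanley /absdeg /decode [(k == _)]eq_sym.
by case: [forall i, _]; case: (_ == k).
Qed.

Lemma coef_prod_coord_genpoly B k : (k <= B)%N ->
  (\prod_i coord_genpoly B i)`_k = (hilb u P N k)%:R.
Proof.
move=> lekB; rewrite hilb_coef_prod.
apply: (@eq_upto_prod _ _ k) => // i j lejk.
by rewrite !coef_coord_genpoly // (leq_trans lejk).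
Qed.

Lemma coord_count_large i j : (`|u i| < j)%N ->
  coord_count i j = (i \in P :|: N)%:R.
Proof.
move=> ltuj; have nzj : (j != 0)%N by lia.
rewrite /coord_count /coord_ok in_setU; case: ifP => iP /=.
  rewrite nzj; have -> : u i <= j%:Z by lia.
  by have -> : (u i <= - j%:Z) = false by apply/negbTE; rewrite -ltNge; lia.
case: ifP => iN /=.
  rewrite nzj; have -> : (j%:Z <= u i) = false.
    by apply/negbTE; rewrite -ltNge; lia.
  by have -> : - j%:Z <= u i by lia.
rewrite -natrD count_abs_eq (_ : (j == `|u i|)%N = false) //.
by apply/negbTE; rewrite neq_ltn ltuj orbT.
Qed.

Lemma coord_count_fixed i j : i \notin P :|: N ->
  coord_count i j = (j == `|u i|)%N%:R.
Proof.
rewrite /coord_count /coord_ok in_setU negb_or => /andP[/negbTE -> /negbTE ->].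
by rewrite -natrD count_abs_eq.
Qed.

Definition coord_factor (i : 'I_n) : {poly int} :=
  if i \in P :|: N then 1 - 'X else 1.

(* For i in P :|: N the tail of the series past degree |u_i| is
   t^(|u_i|+1) / (1 - t). *)
Definition coord_numer (i : 'I_n) : {poly int} :=
  if i \in P :|: N then
    (1 - 'X) * \poly_(j < `|u i|.+1) coord_count i j + 'X^(`|u i|.+1)
  else 'X^(`|u i|).

Lemma coord_numer_at1 i : (coord_numer i).[1] = 1.
Proof.
by rewrite /coord_numer; case: ifP => _; rewrite !hornerE expr1n.
Qed.

Lemma eq_upto_coord_numer D i :
  eq_upto D (coord_factor i * coord_genpoly D i) (coord_numer i).
Proof.
move=> j lejD; rewrite /coord_factor /coord_numer.
case: ifP => iPN; last first.
  by rewrite mul1r coefXn coef_coord_genpoly // coord_count_fixed ?iPN.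
have large k : (`|u i| < k)%N -> coord_count i k = 1.
  by move=> ltuk; rewrite coord_count_large ?iPN.
rewrite !mulrBl !mul1r !(coefD, coefN, coefXM) coefXn !coef_poly.
rewrite coef_coord_genpoly //; case: j lejD => [|j] lejD /=.
  by rewrite !subr0 ?addr0.
rewrite coef_coord_genpoly ?(ltnW lejD) // !ltnS eqSS.
case: ltngtP => [ltju|ltuj|->].
- by rewrite addr0.
- by rewrite !large ?subrr ?subr0 ?addr0 // ltnW.
- by rewrite large // sub0r addrC.
Qed.

Lemma prod_coord_factor : [disjoint P & N] ->
  (1 - 'X) ^+ (#|P| + #|N|) = \prod_i coord_factor i.
Proof.
move=> disPN; rewrite /coord_factor -big_mkcond /= prodr_const.
by rewrite cardsU disjoint_setI0 // cards0 subn0.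
Qed.

End CoordinateSeries.

Theorem lemma6p4 (n : nat) (A : {set 'I_n}) (u : 'I_n -> int)
    (P N : {set 'I_n}) :
  (forall j : 'I_n, j \notin A -> 0 <= u j) ->
  N \subset A ->
  [disjoint P & N] ->
  exists Q : {poly int},
    Q.[1] = 1 /\
    forall d : nat,
      Q`_d = \sum_(k < d.+1)
               ((1 - 'X) ^+ (#|P| + #|N|))`_k * (hilb u P N (d - k))%:R.
Proof.
(* The conditions involving A only say that u is a monomial of S_f; the
   Hilbert series computation does not need them. *)
move=> _ _ disPN; exists (\prod_i coord_numer n u P N i); split.
  by rewrite horner_prod big1 // => i _; rewrite coord_numer_at1.
move=> d; have eq_series : eq_upto d (\prod_i coord_numer n u P N i)
    ((\prod_i coord_factor n P N i) * \prod_i coord_genpoly n u P N d i).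
  by rewrite -big_split; apply: eq_upto_prod => i j lejd;
     rewrite eq_upto_coord_numer.
rewrite eq_series // prod_coord_factor // coefM; apply: eq_bigr => k _.
by rewrite coef_prod_coord_genpoly // leq_subr.
Qed.
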